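(* Let $C$ be a configuration of a finite labeled prime event structure and let $e_1,e_2\in C$ be concurrent events. Then $T(C)=T(C_{e_1<e_2})\cup T(C_{e_2<e_1})$ and $T(C_{e_1<e_2})\cap T(C_{e_2<e_1})=\emptyset$.
   Context: A finite labeled prime event structure is $\langle E,<,\#,h\rangle$ with finite $E$, strict partial order $<$ (causality), labeling $h$, and symmetric irreflexive conflict relation $\#$ closed under $<$. A configuration is a left-closed, conflict-free subset of $E$. Events $e,e'$ are concurrent if $e\neq e'$, neither $e<e'$ nor $e'<e$, and not $e\#e'$. $T(C)$ is the set of traces of $C$: sequences in which every event of $C$ occurs exactly once and $e_i<e_j$ implies $i<j$. The split $C_{e_1<e_2}$ is the structure with event set $C$, causality $(<\cup\{(e_1,e_2)\})^+$ restricted to $C\times C$ ($^+$ denoting transitive closure), no conflicts, and labeling $h|_C$; $T(C_{e_1<e_2})$ is the set of sequences listing every event of $C$ exactly once and respecting this enlarged causality. *)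

From mathcomp Require Import all_boot.
From Stdlib Require Import Relations.
Set Implicit Arguments. Unset Strict Implicit. Unset Printing Implicit Defensive.

Definition is_pes (E : finType) (L : Type) (lt cf : rel E) (h : E -> L) : Prop :=
  (forall e, ~~ lt e e) /\
  (forall e1 e2 e3, lt e1 e2 -> lt e2 e3 -> lt e1 e3) /\
  (forall e, ~~ cf e e) /\
  (forall e1 e2, cf e1 e2 -> cf e2 e1) /\
  (forall e1 e2 e3, cf e1 e2 -> lt e2 e3 -> cf e1 e3).

Definition is_configuration (E : finType) (lt cf : rel E) (C : {set E}) : Prop :=
  (forall e e', e' \in C -> lt e e' -> e \in C) /\
  (forall e e', e \in C -> e' \in C -> ~~ cf e e').

Definition concurrent (E : finType) (lt cf : rel E) (e e' : E) : Prop :=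
  e <> e' /\ ~~ lt e e' /\ ~~ lt e' e /\ ~~ cf e e'.

Definition traces_rel (E : finType) (C : {set E}) (R : E -> E -> Prop)
  (s : seq E) : Prop :=
  uniq s /\ (forall x, (x \in s) = (x \in C)) /\
  (forall x y, x \in s -> y \in s -> R x y -> index x s < index y s).

Definition traces (E : finType) (lt : rel E) (C : {set E}) : seq E -> Prop :=
  traces_rel C (fun x y => lt x y).

Definition split_lt (E : finType) (lt : rel E) (C : {set E}) (e1 e2 : E)
  : E -> E -> Prop :=
  fun x y => x \in C /\ y \in C /\
    clos_trans E (fun a b => lt a b \/ (a = e1 /\ b = e2)) x y.

Definition split_traces (E : finType) (lt : rel E) (C : {set E}) (e1 e2 : E)
  : seq E -> Prop :=
  traces_rel C (split_lt lt C e1 e2).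

(* A trace of C lists e1 and e2 in one of two orders, and it is a trace of the
   split that adds that order: every step of the enlarged causality either is a
   step of < inside the left-closed set C, which the trace already respects, or
   is the added pair, which it respects by choice of the split.  Conversely a
   split trace is a trace of C, and no sequence can put e1 both before and
   after e2. *)
From mathcomp Require Import all_boot.
From Stdlib Require Import Relations.

Lemma clos_trans_ltn_down {T : Type} (P : T -> Prop) (m : T -> nat)
    {R : T -> T -> Prop} :
  (forall a b, R a b -> P b -> P a /\ m a < m b) ->
  forall x y, clos_trans T R x y -> P y -> P x /\ m x < m y.
Proof.
move=> Rdown x y; elim=> {x y} [a b /Rdown //|a b c _ IHab _ IHbc Pc].
have [Pb mbc] := IHbc Pc; have [Pa mab] := IHab Pb.
by split=> //; apply: ltn_trans mbc.
Qed.

Section Traces.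

Variables (E : finType) (C : {set E}).

Lemma traces_rel_sub (R R' : E -> E -> Prop) (s : seq E) :
  (forall x y, x \in C -> y \in C -> R x y -> R' x y) ->
  traces_rel C R' s -> traces_rel C R s.
Proof.
move=> RR' [s_uniq [s_C R's]]; split=> //; split=> // x y xs ys Rxy.
by apply: R's => //; apply: RR'; rewrite -?s_C.
Qed.

Lemma traces_rel_index_lt (R : E -> E -> Prop) (s : seq E) x y :
  traces_rel C R s -> x \in C -> y \in C -> R x y -> index x s < index y s.
Proof. by move=> [_ [s_C Rs]] xC yC; apply: Rs; rewrite s_C. Qed.

Variables (lt : rel E) (e1 e2 : E).

Lemma split_traces_traces s : split_traces lt C e1 e2 s -> traces lt C s.
Proof.
apply: traces_rel_sub => x y xC yC ltxy.
by do 2!split=> //; apply: t_step; left.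
Qed.

Lemma split_traces_index_lt s :
  e1 \in C -> e2 \in C -> split_traces lt C e1 e2 s -> index e1 s < index e2 s.
Proof.
move=> e1C e2C /traces_rel_index_lt; apply=> //.
by do 2!split=> //; apply: t_step; right.
Qed.

Hypothesis C_left_closed : forall e e', e' \in C -> lt e e' -> e \in C.

Lemma traces_split_traces s :
  e1 \in C -> index e1 s < index e2 s -> traces lt C s -> split_traces lt C e1 e2 s.
Proof.
move=> e1C e12 tr; have [s_uniq [s_C _]] := tr.
split=> //; split=> // x y _ _ [_ [yC xy]].
suff : x \in C /\ index x s < index y s by move=> [].
apply: (clos_trans_ltn_down (fun z => z \in C) (index^~ s) _ _ _ xy yC)
  => a b [ltab | [-> ->]] bC //.
have aC := C_left_closed _ _ bC ltab.
by split=> //; apply: traces_rel_index_lt tr aC bC ltab.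
Qed.

End Traces.

Theorem lemma11 (E : finType) (L : Type) (lt cf : rel E) (h : E -> L)
  (C : {set E}) (e1 e2 : E) :
  is_pes lt cf h ->
  is_configuration lt cf C ->
  e1 \in C -> e2 \in C ->
  concurrent lt cf e1 e2 ->
  (forall s : seq E,
     traces lt C s <-> (split_traces lt C e1 e2 s \/ split_traces lt C e2 e1 s)) /\
  (forall s : seq E,
     ~ (split_traces lt C e1 e2 s /\ split_traces lt C e2 e1 s)).
Proof.
move=> _ [C_left_closed _] e1C e2C [e1_neq_e2 _].
split=> s; last first.
  move=> [/split_traces_index_lt e12 /split_traces_index_lt e21].
  by move: (ltn_trans (e12 e1C e2C) (e21 e2C e1C)); rewrite ltnn.
split; last by case=> /split_traces_traces.
move=> tr; have [_ [s_C _]] := tr.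
have e1s : e1 \in s by rewrite s_C.
have e2s : e2 \in s by rewrite s_C.
case: (ltngtP (index e1 s) (index e2 s)) => [e12 | e21 | /index_inj e12].
- by left; apply: traces_split_traces.
- by right; apply: traces_split_traces.
- by case: e1_neq_e2; apply: e12.
Qed.
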